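(* Let $G$ be a loopless multigraph, let $k \geq 1$, and let $M$ be a maximal $k$-edge-colorable subgraph of $G$ (maximal with respect to inclusion of edge sets). For every $v \in V(G)$ with $d_M(v) < k$, \[ d^{F}(v) \leq d_M(v) - \sum_{w \in U_k(v)}\bigl(k - d_M(w) - \mu_G(v,w)\bigr). \]
   Context: For vertices $v,w$ of a multigraph $G$, $\mu_G(v,w)$ is the number of edges joining $v$ and $w$; for a subgraph $M$, $\mu_M(v,w)$ is the number of $M$-edges joining them and $d_M(v)$ is the number of $M$-edges incident to $v$. $N(v)=N_G(v)$ is the set of neighbors of $v$ in $G$. A proper $k$-edge-coloring assigns colors from $\{1,\dots,k\}$ so that distinct edges sharing an endpoint get distinct colors. For each $v\in V(G)$ define $F_k(v) = \{w \in N(v) : d_M(w) \leq k - \mu_G(v,w)\}$, $U_k(v) = \{w \in F_k(v) : \mu_M(v,w) < \mu_G(v,w)\}$, and $d^{F}(v) = \sum_{w\in F_k(v)} \mu_G(v,w)$. *)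

From HB Require Import structures.
From mathcomp Require Import all_boot all_order all_algebra.
Set Implicit Arguments. Unset Strict Implicit. Unset Printing Implicit Defensive.

(* A multigraph G with finite vertex type V and finite edge type E;
   edge e joins src e and tgt e.  Loopless: src e != tgt e. *)
Section Multigraph.
Variables (V E : finType) (src tgt : E -> V).

Definition loopless := forall e : E, src e != tgt e.

Definition joins (e : E) (v w : V) : bool :=
  ((src e == v) && (tgt e == w)) || ((src e == w) && (tgt e == v)).

Definition incident (e : E) (v : V) : bool := (src e == v) || (tgt e == v).

Definition muG (v w : V) : nat := #|[set e : E | joins e v w]|.
(* mu_M(v,w), M a (spanning) subgraph given by its edge set *)
Definition muM (M : {set E}) (v w : V) : nat := #|[set e in M | joins e v w]|.
Definition degM (M : {set E}) (v : V) : nat := #|[set e in M | incident e v]|.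
Definition nbhd (v : V) : {set V} := [set w | (0 < muG v w)%N].

Definition proper_coloring (k : nat) (M : {set E}) (c : E -> 'I_k) : Prop :=
  forall e f, e \in M -> f \in M -> e != f ->
    (exists v, incident e v && incident f v) -> c e != c f.

Definition k_edge_colorable (k : nat) (M : {set E}) : Prop :=
  exists c : E -> 'I_k, @proper_coloring k M c.

Definition maximal_k_colorable (k : nat) (M : {set E}) : Prop :=
  k_edge_colorable k M /\
  forall M' : {set E}, M \proper M' -> ~ k_edge_colorable k M'.

(* F_k(v) = {w in N(v) : d_M(w) <= k - mu_G(v,w)}  (integer arithmetic,
   written without truncated subtraction) *)
Definition Fk (k : nat) (M : {set E}) (v : V) : {set V} :=
  [set w in nbhd v | (degM M w + muG v w <= k)%N].

Definition Uk (k : nat) (M : {set E}) (v : V) : {set V} :=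
  [set w in Fk k M v | (muM M v w < muG v w)%N].

Definition dF (k : nat) (M : {set E}) (v : V) : nat :=
  (\sum_(w in Fk k M v) muG v w)%N.

End Multigraph.

From HB Require Import structures.
From mathcomp Require Import all_boot all_order all_algebra perm.
From mathcomp Require Import zify.
Set Implicit Arguments. Unset Strict Implicit. Unset Printing Implicit Defensive.

(* Fix a proper k-colouring of M and call a vertex fan-reachable if it is reached from v
   by first following an edge of G - M at v, then repeatedly an M-edge at v whose colour
   is missing at the vertex reached before.  By maximality of M, Vizing's fan recolouring
   shows that no colour missing at v is missing at a fan-reachable vertex, and a Kempe
   chain swap shows that distinct fan-reachable vertices miss disjoint sets of colours.
   So every colour missing at a fan-reachable vertex is the colour of its own M-edge from
   v to a fan-reachable vertex: the sum of k - d_M(y) over fan-reachable y is at most the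
   number of M-edges from v to them.  The vertices of U_k(v) are fan-reachable, and
   comparing contributions vertex by vertex gives the inequality. *)

Lemma dvdn_lt_double_eq d m : 0 < m < 2 * d -> d %| m -> m = d.
Proof.
move=> /andP[m_gt0 m_lt] /dvdnP[q def_m]; subst m.
have d_gt0 : 0 < d by case: d {m_gt0} m_lt => //; rewrite muln0.
have q_lt2 : q < 2 by rewrite -(ltn_pmul2r d_gt0).
by case: q {m_lt} q_lt2 m_gt0 => [|[|]] //; rewrite mul1n.
Qed.

Lemma iter_can (T : Type) (f g : T -> T) n : cancel g f -> cancel (iter n g) (iter n f).
Proof. by move=> gK; elim: n => // n IHn x; rewrite iterSr iterS gK IHn. Qed.

Lemma order_dvdn_iter (T : finType) (f : T -> T) x m :
  injective f -> iter m f x = x -> order f x %| m.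
Proof.
move=> f_inj fmx; have ord_gt0 := order_gt0 f x.
have iter_mul q : iter (q * order f x) f x = x.
  by elim: q => // q IHq; rewrite mulSn iterD IHq iter_order.
have fmod : iter (m %% order f x) f x = x.
  by rewrite (divn_eq m (order f x)) addnC iterD iter_mul in fmx.
by have := findex_iter (ltn_pmod m ord_gt0); rewrite fmod findex0 => /esym/eqP.
Qed.

Section Coloring.
Variables (V E : finType) (src tgt : E -> V) (k : nat).
Hypothesis loopl : loopless src tgt.

Local Notation incid := (incident src tgt).
Local Notation proper := (@proper_coloring V E src tgt k).
Local Notation colorable := (@k_edge_colorable V E src tgt k).

Definition other (e : E) (x : V) : V := if src e == x then tgt e else src e.

Lemma incident_other e x : incid e (other e x).
Proof. by rewrite /other /incident; case: (src e == x); rewrite eqxx ?orbT. Qed.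

Lemma incident_otherE e x y : incid e x -> incid e y = (y == x) || (y == other e x).
Proof.
rewrite /incident /other; case: (eqVneq (src e) x) => [<- _|_ /= /eqP <-].
  by rewrite !(eq_sym y).
by rewrite !(eq_sym y) orbC.
Qed.

Lemma other_neq e x : incid e x -> other e x != x.
Proof.
rewrite /other /incident; case: (eqVneq (src e) x) => [<-|//].
by rewrite eq_sym loopl.
Qed.

Lemma otherK e x : incid e x -> other e (other e x) = x.
Proof.
move=> ex; have := incident_other e (other e x); rewrite (incident_otherE _ ex).
case/orP=> /eqP // ooE.
by move: (other_neq (incident_other e x)); rewrite ooE eqxx.
Qed.

Lemma joinsE e x y : joins src tgt e x y = incid e x && (other e x == y).
Proof.
rewrite /joins /incident /other; case: (eqVneq (src e) x) => [->|sx] /=.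
  by case: (eqVneq (tgt e) x) => [->|tx]; rewrite ?andbT ?andbF ?orbF ?orbb.
by rewrite andbC.
Qed.

Definition missing (phi : E -> 'I_k) (S : {set E}) (x : V) : {set 'I_k} :=
  [set c | [forall e in S, incid e x ==> (phi e != c)]].

Lemma missingP phi (S : {set E}) x c :
  reflect (forall e, e \in S -> incid e x -> phi e != c) (c \in missing phi S x).
Proof.
rewrite inE; apply: (iffP forallP) => [H e eS ex|H e].
  by move: (H e); rewrite eS ex.
by apply/implyP => eS; apply/implyP; apply: H.
Qed.

Lemma missingPn phi (S : {set E}) x c :
  c \notin missing phi S x -> exists2 e, e \in S & incid e x && (phi e == c).
Proof.
rewrite inE negb_forall => /existsP[e]; rewrite negb_imply => /andP[eS].
by rewrite negb_imply negbK => ?; exists e.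
Qed.

Lemma missingS (S S' : {set E}) phi x : S' \subset S ->
  {subset missing phi S x <= missing phi S' x}.
Proof. by move=> sS'S c /missingP cx; apply/missingP => e /(subsetP sS'S); apply: cx. Qed.

Lemma proper_coloring_inj (S : {set E}) phi x e f : proper S phi -> e \in S -> f \in S ->
  incid e x -> incid f x -> phi e = phi f -> e = f.
Proof.
move=> phiP eS fS ex fx efE; apply/eqP; apply: contraT => ef.
by move: (phiP e f eS fS ef); rewrite efE eqxx; apply; exists x; rewrite ex fx.
Qed.

Lemma proper_coloringS (S S' : {set E}) phi : S' \subset S -> proper S phi -> proper S' phi.
Proof. by move=> sS'S phiP e f eS fS; apply: phiP; apply: (subsetP sS'S). Qed.

Lemma card_missing (S : {set E}) phi x :
  proper S phi -> #|missing phi S x| + degM src tgt S x = k.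
Proof.
move=> phiP; set Sx := [set e in S | incid e x].
have -> : missing phi S x = ~: (phi @: Sx).
  apply/setP => c; rewrite in_setC; apply/missingP/negP => [H /imsetP[e]|H e eS ex].
    by rewrite inE => /andP[eS ex] ce; move: (H e eS ex); rewrite ce eqxx.
  by apply/eqP => ce; apply: H; apply/imsetP; exists e; rewrite ?inE ?eS.
have inj_phi : {in Sx &, injective phi}.
  move=> e f; rewrite !inE => /andP[eS ex] /andP[fS fx].
  exact: proper_coloring_inj phiP eS fS ex fx.
by rewrite /degM -/Sx -(card_in_imset inj_phi) addnC cardsC card_ord.
Qed.

Lemma missing_setD1 (S : {set E}) phi h x : proper S phi -> h \in S -> incid h x ->
  phi h \in missing phi (S :\ h) x.
Proof.
move=> phiP hS hx; apply/missingP => e; rewrite !inE => /andP[eh eS] ex.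
by apply: contra eh => /eqP ephi; rewrite (proper_coloring_inj phiP eS hS ex hx ephi).
Qed.

Definition recolor (phi : E -> 'I_k) g c : E -> 'I_k :=
  fun e => if e == g then c else phi e.

Lemma proper_recolor_setU1 (S : {set E}) phi g c x : proper S phi -> g \notin S -> incid g x ->
  c \in missing phi S x -> c \in missing phi S (other g x) ->
  proper (g |: S) (recolor phi g c).
Proof.
move=> phiP gS gx /missingP cx /missingP cy.
have c_new f y : f \in S -> incid g y -> incid f y -> phi f != c.
  by move=> fS; rewrite (incident_otherE _ gx) => /orP[] /eqP ->; [apply: cx | apply: cy].
move=> e f; rewrite !inE /recolor.
case: (eqVneq e g) => [->|eg]; case: (eqVneq f g) => [->|fg] //=.
- by move=> _ fS _ [y /andP[gy fy]]; rewrite eq_sym; apply: c_new fS gy fy.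
- by move=> eS _ _ [y /andP[ey gy]]; apply: c_new eS gy ey.
- by move=> eS fS; apply: phiP.
Qed.

Lemma colorable_setU1 (S : {set E}) phi g c x : proper S phi -> g \notin S -> incid g x ->
  c \in missing phi S x -> c \in missing phi S (other g x) -> colorable (g |: S).
Proof.
move=> phiP gS gx cx cy; exists (recolor phi g c).
exact: (proper_recolor_setU1 phiP gS gx cx cy).
Qed.

Section KempeChain.
Variables (M : {set E}) (phi : E -> 'I_k).
Hypothesis phiP : proper M phi.

Definition kempe_step (c : 'I_k) (x : V) : V :=
  if [pick e in M | (phi e == c) && incid e x] is Some e then other e x else x.

Lemma kempe_stepE e x : e \in M -> incid e x -> kempe_step (phi e) x = other e x.
Proof.
move=> eM ex; rewrite /kempe_step; case: pickP => [f /andP[fM /andP[/eqP fe fx]]|].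
  by rewrite (proper_coloring_inj phiP fM eM fx ex fe).
by move/(_ e); rewrite eM eqxx ex.
Qed.

Lemma kempe_step_id c x : c \in missing phi M x -> kempe_step c x = x.
Proof.
move/missingP => cx; rewrite /kempe_step; case: pickP => // e /andP[eM /andP[/eqP ce ex]].
by move: (cx e eM ex); rewrite ce eqxx.
Qed.

Lemma kempe_stepK c : involutive (kempe_step c).
Proof.
move=> x; case: (boolP (c \in missing phi M x)) => [cx|/missingPn[e eM /andP[ex /eqP <-]]].
  by rewrite !kempe_step_id.
by rewrite kempe_stepE // kempe_stepE ?otherK ?incident_other.
Qed.

Variables al be : 'I_k.

Definition kempe_rot (x : V) : V := kempe_step al (kempe_step be x).
Definition kempe_rot_inv (x : V) : V := kempe_step be (kempe_step al x).

Lemma kempe_rotK : cancel kempe_rot_inv kempe_rot.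
Proof. by move=> x; rewrite /kempe_rot /kempe_rot_inv !kempe_stepK. Qed.

Lemma kempe_rot_invK : cancel kempe_rot kempe_rot_inv.
Proof. by move=> x; rewrite /kempe_rot /kempe_rot_inv !kempe_stepK. Qed.

Lemma kempe_rot_inj : injective kempe_rot.
Proof. exact: can_inj kempe_rot_invK. Qed.

Definition kempe (x y : V) : bool := (y == kempe_step al x) || (y == kempe_step be x).

Lemma kempe_sym : symmetric kempe.
Proof.
by move=> x y; apply/idP/idP => /orP[] /eqP ->; rewrite /kempe kempe_stepK eqxx ?orbT.
Qed.

(* From an end [w] of an (al, be)-chain, [kempe_rot] advances two vertices at a time and
   bounces back at the other end: the chain lies in the [kempe_rot]-orbit of [w], and its
   other end sits at the middle of that orbit. *)
Section KempeChainEnds.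
Variable w : V.
Hypothesis al_w : al \in missing phi M w.

Local Notation orbit_w := (fconnect kempe_rot w).

Lemma kempe_step_iter_rot i : kempe_step al (iter i kempe_rot w) = iter i kempe_rot_inv w.
Proof.
elim: i => [|i IHi] /=; first exact: kempe_step_id.
by rewrite /kempe_rot kempe_stepK /kempe_rot_inv -IHi kempe_stepK.
Qed.

Lemma fconnect_rot_inv x : orbit_w x -> orbit_w (kempe_rot_inv x).
Proof.
move=> wx; apply: connect_trans wx _; rewrite fconnect_sym; last exact: kempe_rot_inj.
by rewrite -{2}(kempe_rotK x); apply: fconnect1.
Qed.

Lemma fconnect_kempe_step_al x : orbit_w x -> orbit_w (kempe_step al x).
Proof.
move=> wx; rewrite -(iter_findex wx) kempe_step_iter_rot.
by elim: (findex _ _ _) => [|i IHi] /=; [apply: connect0 | apply: fconnect_rot_inv].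
Qed.

Lemma fconnect_kempe_step_be x : orbit_w x -> orbit_w (kempe_step be x).
Proof.
move=> wx; have -> : kempe_step be x = kempe_step al (kempe_rot x).
  by rewrite /kempe_rot kempe_stepK.
by apply: fconnect_kempe_step_al; apply: connect_trans wx (fconnect1 _ _).
Qed.

Lemma connect_kempe_rot y : connect kempe w y -> orbit_w y.
Proof.
have orbit_closed : closed kempe orbit_w.
  apply: intro_closed; first exact: sym_connect_sym kempe_sym.
  by move=> x z /orP[] /eqP ->; [apply: fconnect_kempe_step_al | apply: fconnect_kempe_step_be].
move=> wy; change (y \in orbit_w); rewrite -(closed_connect orbit_closed wy).
exact: connect0.
Qed.

Lemma kempe_end_findex y : y != w ->
  (al \in missing phi M y) || (be \in missing phi M y) -> connect kempe w y ->
  findex kempe_rot w y = (order kempe_rot w)./2.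
Proof.
move=> yw end_y /connect_kempe_rot wy; set i := findex kempe_rot w y.
have iterE : iter i kempe_rot w = y by apply: iter_findex.
have i_lt : i < order kempe_rot w by apply: findex_max.
have i_gt0 : 0 < i by rewrite lt0n findex_eq0 eq_sym.
suff [m m_eq m_back] : exists2 m, m = i.*2 \/ m = i.*2.+1 & iter m kempe_rot w = w.
  have m_bound : 0 < m < 2 * order kempe_rot w by case: m_eq => ->; lia.
  have := dvdn_lt_double_eq m_bound (order_dvdn_iter kempe_rot_inj m_back); lia.
case/orP: end_y => /kempe_step_id y_fix.
  exists i.*2; first by left.
  rewrite -addnn iterD iterE -y_fix -iterE kempe_step_iter_rot.
  exact: iter_can kempe_rotK w.
exists i.*2.+1; first by right.
have y_rot : kempe_step be y = iter i.+1 kempe_rot_inv w.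
  by rewrite -kempe_step_iter_rot /= /kempe_rot kempe_stepK iterE.
rewrite -addnn -addSn iterD iterE -y_fix y_rot.
exact: iter_can kempe_rotK w.
Qed.

Lemma kempe_chain_ends y y' : y != w -> y' != w ->
  (al \in missing phi M y) || (be \in missing phi M y) ->
  (al \in missing phi M y') || (be \in missing phi M y') ->
  connect kempe w y -> connect kempe w y' -> y = y'.
Proof.
move=> yw y'w end_y end_y' wy wy'.
rewrite -(iter_findex (connect_kempe_rot wy)) -(iter_findex (connect_kempe_rot wy')).
by rewrite (kempe_end_findex yw end_y wy) (kempe_end_findex y'w end_y' wy').
Qed.

End KempeChainEnds.

Section KempeSwap.
Variable z : V.

Definition kempe_comp : {set V} := [set x | connect kempe z x].

Definition swap_at (x : V) (c : 'I_k) : 'I_k := if x \in kempe_comp then tperm al be c else c.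

Definition kempe_swap (e : E) : 'I_k := swap_at (src e) (phi e).

Lemma swap_atK x : involutive (swap_at x).
Proof. by move=> c; rewrite /swap_at; case: (_ \in _); rewrite ?tpermK. Qed.

Lemma swap_at_out x c : x \notin kempe_comp -> swap_at x c = c.
Proof. by rewrite /swap_at => /negbTE ->. Qed.

Lemma swap_at_in x c : x \in kempe_comp -> swap_at x c = tperm al be c.
Proof. by rewrite /swap_at => ->. Qed.

Lemma swap_at_id x c : c != al -> c != be -> swap_at x c = c.
Proof. by move=> cal cbe; rewrite /swap_at tpermD ?if_same // eq_sym. Qed.

Lemma kempe_comp_other e x : e \in M -> incid e x -> (phi e == al) || (phi e == be) ->
  (other e x \in kempe_comp) = (x \in kempe_comp).
Proof.
move=> eM ex phi_e; have kx : kempe x (other e x).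
  by rewrite /kempe -kempe_stepE //; case/orP: phi_e => /eqP ->; rewrite eqxx ?orbT.
by rewrite !inE; apply/esym/(connect_closed (sym_connect_sym kempe_sym) z kx).
Qed.

Lemma kempe_swapE e x : e \in M -> incid e x -> kempe_swap e = swap_at x (phi e).
Proof.
move=> eM ex; rewrite /kempe_swap.
have [phi_e|] := boolP ((phi e == al) || (phi e == be)); last first.
  by rewrite negb_or => /andP[? ?]; rewrite !swap_at_id.
have [<- //|sx] := eqVneq (src e) x.
by rewrite /swap_at -(kempe_comp_other eM ex phi_e) /other (negbTE sx).
Qed.

Lemma proper_kempe_swap : proper M kempe_swap.
Proof.
move=> e f eM fM ef [x /andP[ex fx]].
rewrite (kempe_swapE eM ex) (kempe_swapE fM fx) (can_eq (swap_atK x)).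
by apply: phiP => //; exists x; rewrite ex fx.
Qed.

Lemma missing_kempe_swap x c :
  (c \in missing kempe_swap M x) = (swap_at x c \in missing phi M x).
Proof.
apply/missingP/missingP => H e eM ex; move: (H e eM ex); rewrite (kempe_swapE eM ex).
  by apply: contra => /eqP ->; rewrite swap_atK.
by apply: contra => /eqP <-; rewrite swap_atK.
Qed.

End KempeSwap.
End KempeChain.

Section Fan.
Variable v : V.

Local Notation far e := (other e v).

Definition fan_step (phi : E -> 'I_k) (S : {set E}) (u x : V) : bool :=
  [exists h, [&& h \in S, incid h v, far h == x & phi h \in missing phi S u]].

(* When colour [a] is missing at [v], fan steps avoiding [b] survive an (a, b)-Kempe swap
   away from [v]. *)
Definition fan_step_avoiding (phi : E -> 'I_k) (b : 'I_k) (S : {set E}) (u x : V) : bool :=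
  [exists h, [&& h \in S, incid h v, far h == x, phi h \in missing phi S u & phi h != b]].

(* Shifting the fan: [g] takes the colour of the first fan edge [h], which becomes the new
   uncoloured edge. *)
Section FanShift.
Variables (S : {set E}) (phi : E -> 'I_k) (g h : E).
Hypotheses (phiP : proper S phi) (gS : g \notin S) (gv : incid g v).
Hypotheses (hS : h \in S) (hv : incid h v) (h_miss : phi h \in missing phi S (far g)).

Local Notation S' := (g |: (S :\ h)).
Local Notation phi' := (recolor phi g (phi h)).

Let gh : g != h. Proof. by apply: contraNneq gS => ->. Qed.

Lemma fan_shift_proper : proper S' phi'.
Proof.
apply: proper_recolor_setU1 gv _ _.
- exact: proper_coloringS (subD1set S h) phiP.
- by rewrite !inE negb_and gS orbT.
- exact: missing_setD1.
- exact: missingS (subD1set S h) _ h_miss.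
Qed.

Lemma fan_shift_notin : h \notin S'.
Proof. by rewrite !inE eqxx eq_sym (negbTE gh). Qed.

Lemma fan_shift_setU1 : h |: S' = g |: S.
Proof.
apply/setP => e; rewrite !inE; case: (eqVneq e h) => [->|//].
by rewrite hS orbT.
Qed.

Lemma fan_shift_missing u d : phi h != d -> d \in missing phi S u -> d \in missing phi' S' u.
Proof.
move=> hd /missingP du; apply/missingP => e; rewrite !inE /recolor.
by case: (eqVneq e g) => [//|_ /andP[_ eS]]; apply: du.
Qed.

Lemma fan_shift_path u q : all (fun z => z != far h) q ->
  path (fan_step phi S) u q -> path (fan_step phi' S') u q.
Proof.
elim: q u => [//|z q IHq] u /= /andP[zh qP] /andP[uz zq].
rewrite IHq // andbT; case/existsP: uz => f /and4P[fS fv /eqP fz f_miss].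
have fh : f != h by apply: contraNneq zh => <-; rewrite fz.
have fg : f != g by apply: contraTneq fS => ->.
apply/existsP; exists f; rewrite in_setU1 in_setD1 fh fS fv fz eqxx orbT /=.
have -> : phi' f = phi f by rewrite /recolor (negbTE fg).
apply: fan_shift_missing => //; apply: contra fh => /eqP hf.
by rewrite (proper_coloring_inj phiP hS fS hv fv hf).
Qed.

End FanShift.

Lemma fan_path_missing S phi g p : proper S phi -> g \notin S -> incid g v ->
  ~ colorable (g |: S) -> path (fan_step phi S) (far g) p -> uniq (far g :: p) ->
  forall c, c \in missing phi S v -> c \notin missing phi S (last (far g) p).
Proof.
elim: p S phi g => [|y p IHp] S phi g phiP gS gv g_max /=.
  move=> _ _ c cv; apply/negP => cg; apply: g_max.
  exact: colorable_setU1 phiP gS gv cv cg.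
case/andP=> /existsP[h /and4P[hS hv /eqP hy h_miss]] yp.
rewrite inE negb_or => /andP[_ /andP[y_p p_uniq]] c cv.
have hc : phi h != c by move/missingP: cv; apply.
have p_far : all (fun z => z != far h) p.
  by rewrite hy; apply/allP => z zp; apply: contraNneq y_p => <-.
have := IHp _ _ h (fan_shift_proper phiP gS gv hS hv h_miss) (fan_shift_notin gS hS) hv.
rewrite fan_shift_setU1 // hy => /(_ g_max (fan_shift_path phiP gS hS hv p_far yp)).
rewrite /= y_p p_uniq => /(_ isT c (fan_shift_missing _ hc cv)).
by apply: contra; apply: fan_shift_missing.
Qed.

Lemma card_edges_to (S : {set E}) (Z : {pred V}) :
  #|[set h in S | incid h v && (far h \in Z)]| = \sum_(y in Z) muM src tgt S v y.
Proof.
rewrite -sum1_card (partition_big (fun h => far h) (mem Z)) /=; last first.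
  by move=> h; rewrite inE => /andP[_ /andP[_ ->]].
apply: eq_bigr => y yZ; rewrite sum1_card; apply: eq_card => e; rewrite !inE joinsE unfold_in !inE.
by case: (eqVneq (far e) y) => [->|]; rewrite ?yZ ?andbT ?andbF.
Qed.

Lemma degM_sum_muM (S : {set E}) : degM src tgt S v = \sum_y muM src tgt S v y.
Proof. by rewrite -card_edges_to; apply: eq_card => e; rewrite !inE andbT. Qed.

Lemma muM_le_muG (S : {set E}) x y : muM src tgt S x y <= muG src tgt x y.
Proof. by apply: subset_leq_card; apply/subsetP => e; rewrite !inE => /andP[]. Qed.

Section MaximalColorable.
Variable M : {set E}.
Hypothesis M_max : forall M' : {set E}, M \proper M' -> ~ colorable M'.

Definition fan_reachable (phi : E -> 'I_k) (y : V) : bool :=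
  [exists g, [&& g \notin M, incid g v & connect (fan_step phi M) (far g) y]].

Definition fan_reachable_avoiding (phi : E -> 'I_k) (b : 'I_k) (y : V) : bool :=
  [exists g, [&& g \notin M, incid g v & connect (fan_step_avoiding phi b M) (far g) y]].

Lemma fan_reachable_missing phi y c : proper M phi -> fan_reachable phi y ->
  c \in missing phi M v -> c \notin missing phi M y.
Proof.
move=> phiP /existsP[g /and3P[gM gv /connectP[p gp ->]]].
have g_max : ~ colorable (g |: M).
  by apply: M_max; apply/properP; split; [apply: subsetUr | exists g; rewrite ?inE ?eqxx].
case: (shortenP gp) => p' gp' p'_uniq _.
exact: fan_path_missing phiP gM gv g_max gp' p'_uniq c.
Qed.

Lemma fan_reachable_step phi y x :
  fan_reachable phi y -> fan_step phi M y x -> fan_reachable phi x.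
Proof.
move=> /existsP[g /and3P[gM gv gy]] yx; apply/existsP; exists g.
by rewrite gM gv (connect_trans gy (connect1 yx)).
Qed.

Lemma fan_reachable_avoidingW phi b y : fan_reachable_avoiding phi b y -> fan_reachable phi y.
Proof.
case/existsP=> g /and3P[gM gv gy]; apply/existsP; exists g; rewrite gM gv /=.
move: gy; apply: connect_sub => u x /existsP[h /and5P[hM hv hx h_miss _]].
by apply/connect1/existsP; exists h; rewrite hM hv hx h_miss.
Qed.

Lemma fan_reachable_avoidingP phi b y : fan_reachable phi y -> b \in missing phi M y ->
  exists2 y', fan_reachable_avoiding phi b y' & b \in missing phi M y'.
Proof.
case/existsP=> g /and3P[gM gv /connectP[p + ->]].
have reach x : connect (fan_step_avoiding phi b M) (far g) x -> fan_reachable_avoiding phi b x.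
  by move=> gx; apply/existsP; exists g; rewrite gM gv gx.
suff from_fan x : connect (fan_step_avoiding phi b M) (far g) x ->
    path (fan_step phi M) x p -> b \in missing phi M (last x p) ->
    exists2 y', fan_reachable_avoiding phi b y' & b \in missing phi M y'.
  exact/from_fan/connect0.
elim: p x => [|z p IHp] x gx /=.
  by move=> _ bx; exists x => //; apply: reach.
case/andP=> /existsP[h /and4P[hM hv hz h_miss]] zp bp.
have [hb|hb] := eqVneq (phi h) b; first by exists x; [apply: reach | rewrite -hb].
apply: IHp zp bp; apply: connect_trans gx (connect1 _).
by apply/existsP; exists h; rewrite hM hv hz h_miss hb.
Qed.

Section FanKempeSwap.
Variables (phi : E -> 'I_k) (al be : 'I_k) (z : V).
Hypotheses (phiP : proper M phi) (al_v : al \in missing phi M v).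
Hypothesis z_v : ~~ connect (kempe M phi al be) z v.

Local Notation psi := (kempe_swap M phi al be z).

Let v_comp : v \notin kempe_comp M phi al be z.
Proof. by rewrite inE. Qed.

Lemma kempe_swap_center h : h \in M -> incid h v -> psi h = phi h.
Proof. by move=> hM hv; rewrite (kempe_swapE phiP _ _ _ hM hv) (swap_at_out _ v_comp). Qed.

Lemma missing_kempe_swap_other u c : c != al -> c != be ->
  (c \in missing psi M u) = (c \in missing phi M u).
Proof. by move=> cal cbe; rewrite missing_kempe_swap // swap_at_id. Qed.

Lemma fan_step_avoiding_swap u x : fan_step_avoiding phi be M u x -> fan_step psi M u x.
Proof.
case/existsP=> h /and5P[hM hv hx h_miss hbe]; apply/existsP; exists h.
have hal : phi h != al by move/missingP: al_v; apply.
by rewrite hM hv hx kempe_swap_center // missing_kempe_swap_other.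
Qed.

Lemma fan_reachable_avoiding_swap y : fan_reachable_avoiding phi be y -> fan_reachable psi y.
Proof.
case/existsP=> g /and3P[gM gv gy]; apply/existsP; exists g; rewrite gM gv /=.
by move: gy; apply: connect_sub => u x ux; apply/connect1/fan_step_avoiding_swap.
Qed.

Lemma fan_reachable_swap y' y : fan_reachable psi y' -> be \in missing psi M y' ->
  fan_reachable phi y -> fan_reachable psi y.
Proof.
move=> y'_reach be_y' /existsP[g /and3P[gM gv /connectP[p + ->]]].
have : fan_reachable psi (far g) by apply/existsP; exists g; rewrite gM gv connect0.
elim: p (far g) => [//|x p IHp] u u_reach /= /andP[ux xp]; apply: IHp xp.
case/existsP: ux => h /and4P[hM hv hx h_miss].
have [hbe|hbe] := eqVneq (phi h) be.
  apply: fan_reachable_step y'_reach _; apply/existsP; exists h.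
  by rewrite hM hv hx kempe_swap_center // hbe.
apply: fan_reachable_step u_reach _; apply: fan_step_avoiding_swap.
by apply/existsP; exists h; rewrite hM hv hx h_miss hbe.
Qed.

Lemma kempe_swap_not_reachable : be \in missing phi M z -> ~~ fan_reachable psi z.
Proof.
move=> be_z; apply/negP => z_reach.
have z_comp : z \in kempe_comp M phi al be z by rewrite inE connect0.
have := fan_reachable_missing (c := al) (proper_kempe_swap phiP al be z) z_reach.
rewrite !missing_kempe_swap // (swap_at_out _ v_comp) (swap_at_in _ z_comp) tpermL.
by rewrite be_z => /(_ al_v).
Qed.

End FanKempeSwap.

Lemma fan_missing_disjoint phi al be y1 y2 : proper M phi -> al \in missing phi M v ->
  fan_reachable phi y1 -> fan_reachable phi y2 -> y1 != y2 ->
  be \in missing phi M y1 -> be \notin missing phi M y2.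
Proof.
move=> phiP al_v y1_reach y2_reach y12 be_y1; apply/negP => be_y2.
have [y' y'_avoid be_y'] := fan_reachable_avoidingP y1_reach be_y1.
have y'_reach := fan_reachable_avoidingW y'_avoid.
have [y [y_reach be_y yy']] :
    exists y, [/\ fan_reachable phi y, be \in missing phi M y & y != y'].
  by case: (eqVneq y1 y') => [<-|]; [exists y2; rewrite eq_sym | exists y1].
have be_v : be \notin missing phi M v.
  by apply: contraL be_y' => be_v; apply: fan_reachable_missing y'_reach be_v.
have yv : y != v by apply: contraNneq be_v => <-.
have y'v : y' != v by apply: contraNneq be_v => <-.
have kempe_csym := sym_connect_sym (kempe_sym phiP al be).
(* The (al, be)-chain from [v] cannot end at both [y] and [y']; swapping the chain of the
   one it misses leaves that vertex fan-reachable and makes [al] missing there. *)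
have [vy'|] := boolP (connect (kempe M phi al be) v y'); last first.
  rewrite kempe_csym => y'_v; move: (kempe_swap_not_reachable phiP al_v y'_v be_y').
  by rewrite (fan_reachable_avoiding_swap phiP al_v y'_v y'_avoid).
have y_v : ~~ connect (kempe M phi al be) y v.
  apply/negP; rewrite kempe_csym => vy; move/eqP: yy'; apply.
  by apply: (kempe_chain_ends phiP al_v yv y'v _ _ vy vy'); rewrite ?be_y ?be_y' orbT.
have y'_comp : y' \notin kempe_comp M phi al be y.
  by rewrite inE; apply: contra y_v => yy'c; apply: connect_trans yy'c _; rewrite kempe_csym.
have be_y'_swap : be \in missing (kempe_swap M phi al be y) M y'.
  by rewrite missing_kempe_swap // (swap_at_out _ y'_comp).
move: (kempe_swap_not_reachable phiP al_v y_v be_y).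
rewrite (fan_reachable_swap phiP al_v y_v _ be_y'_swap y_reach) //.
exact: fan_reachable_avoiding_swap y'_avoid.
Qed.

Lemma card_fan_missing_le phi al c : proper M phi -> al \in missing phi M v ->
  #|[set y | fan_reachable phi y & c \in missing phi M y]|
    <= (c \in phi @: [set h in M | incid h v & fan_reachable phi (far h)]).
Proof.
move=> phiP al_v.
have [/eqP ->|/set0Pn[y0]] :=
  boolP ([set y | fan_reachable phi y & c \in missing phi M y] == set0).
  by rewrite cards0.
rewrite inE => /andP[y0_reach c_y0].
have -> : [set y | fan_reachable phi y & c \in missing phi M y] = [set y0].
  apply/setP => y; rewrite in_set1 [y \in _]inE.
  apply/andP/eqP => [[y_reach c_y]|->]; last by split.
  apply: contraTeq c_y0 => yy0.
  exact: fan_missing_disjoint phiP al_v y_reach y0_reach yy0 c_y.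
have /missingPn[h hM /andP[hv /eqP hc]] : c \notin missing phi M v.
  by apply: contraL c_y0 => c_v; apply: fan_reachable_missing y0_reach c_v.
rewrite cards1 lt0b; apply/imsetP; exists h => //; rewrite !inE hM hv /=.
by apply: fan_reachable_step y0_reach _; apply/existsP; exists h; rewrite hM hv eqxx hc.
Qed.

Lemma sum_fan_missing_le phi al : proper M phi -> al \in missing phi M v ->
  \sum_(y | fan_reachable phi y) #|missing phi M y|
    <= \sum_(y | fan_reachable phi y) muM src tgt M v y.
Proof.
move=> phiP al_v; set A := [set h in M | incid h v & fan_reachable phi (far h)].
rewrite -card_edges_to -/A; apply: leq_trans (leq_imset_card phi A).
rewrite -sum1_card [X in _ <= X]big_mkcond /=.
have -> : \sum_(y | fan_reachable phi y) #|missing phi M y| =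
          \sum_c #|[set y | fan_reachable phi y & c \in missing phi M y]|.
  transitivity (\sum_(y | fan_reachable phi y) \sum_c (c \in missing phi M y) : nat).
    by apply: eq_bigr => y _; rewrite -sum1_card big_mkcond.
  rewrite exchange_big /=; apply: eq_bigr => c _.
  rewrite -sum1_card [RHS]big_mkcond [LHS]big_mkcond; apply: eq_bigr => y _.
  by rewrite [y \in _]inE; case: (fan_reachable phi y).
by apply: leq_sum => c _; have := card_fan_missing_le c phiP al_v; rewrite -/A.
Qed.

Lemma Uk_fan_reachable phi w : w \in Uk src tgt k M v -> fan_reachable phi w.
Proof.
rewrite inE => /andP[_ muM_lt].
have [g /andP[gvw gM]] : exists g, joins src tgt g v w && (g \notin M).
  apply/existsP; apply: contraLR muM_lt; rewrite negb_exists -leqNgt => /forallP noM.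
  apply: subset_leq_card; apply/subsetP => e; rewrite !inE => evw.
  by move: (noM e); rewrite evw /= negbK andbT.
move: gvw; rewrite joinsE => /andP[gv /eqP <-].
by apply/existsP; exists g; rewrite gM gv connect0.
Qed.

Lemma fan_degree_bound phi : proper M phi -> degM src tgt M v < k ->
  dF src tgt k M v + \sum_(w in Uk src tgt k M v) (k - degM src tgt M w - muG src tgt v w)
    <= degM src tgt M v.
Proof.
move=> phiP dv; have [al al_v] : exists al, al \in missing phi M v.
  by apply/set0Pn; rewrite -card_gt0; have := card_missing v phiP; lia.
set F := Fk src tgt k M v; set U := Uk src tgt k M v; set R := fan_reachable phi.
have vertex_bound w :
    (if w \in F then muG src tgt v w else 0)
    + (if w \in U then k - degM src tgt M w - muG src tgt v w else 0)
    + (if R w then muM src tgt M v w else 0)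
  <= muM src tgt M v w + (if R w then #|missing phi M w| else 0).
  have U_F : w \in U -> w \in F by rewrite inE => /andP[].
  have U_R : w \in U -> R w by apply: Uk_fan_reachable.
  have F_deg : w \in F -> degM src tgt M w + muG src tgt v w <= k by rewrite inE => /andP[].
  have F_U : w \in F -> w \notin U -> muG src tgt v w <= muM src tgt M v w.
    by rewrite [w \in U]inE => -> /=; rewrite -leqNgt.
  have := card_missing w phiP; have := muM_le_muG M v w.
  move: U_F U_R F_deg F_U; case: (w \in U); case: (w \in F); case: (R w) => /=; lia.
have : \sum_(w in F) muG src tgt v w
       + \sum_(w in U) (k - degM src tgt M w - muG src tgt v w)
       + \sum_(w | R w) muM src tgt M v w
    <= \sum_w muM src tgt M v w + \sum_(w | R w) #|missing phi M w|.
  rewrite big_mkcond [\sum_(w in U) _]big_mkcond [\sum_(w | R w) muM _ _ _ _ _]big_mkcond.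
  rewrite [\sum_(w | R w) #|_|]big_mkcond -!big_split; apply: leq_sum => w _; exact: vertex_bound.
have := sum_fan_missing_le phiP al_v; rewrite degM_sum_muM /dF -/F -/U -/R; lia.
Qed.

End MaximalColorable.
End Fan.
End Coloring.

Unset Implicit Arguments.
Import Order.TTheory GRing.Theory Num.Theory.
Local Open Scope ring_scope.

Theorem mainTheorem3 (V E : finType) (src tgt : E -> V) (k : nat)
  (M : {set E}) (v : V) :
  loopless src tgt ->
  (1 <= k)%N ->
  maximal_k_colorable src tgt k M ->
  (degM src tgt M v < k)%N ->
  ((dF src tgt k M v)%:Z <=
     (degM src tgt M v)%:Z -
     \sum_(w in Uk src tgt k M v)
        (k%:Z - (degM src tgt M w)%:Z - (muG src tgt v w)%:Z)).
Proof.
move=> loopl _ [[phi phiP] M_max] dv.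
have bound := fan_degree_bound loopl M_max phiP dv.
have Uk_terms : {in Uk src tgt k M v, forall w,
    k%:Z - (degM src tgt M w)%:Z - (muG src tgt v w)%:Z
    = (k - degM src tgt M w - muG src tgt v w)%N%:R}.
  by move=> w; rewrite !inE => /andP[/andP[_ Fw] _]; rewrite natz !subzn //; lia.
by rewrite (eq_bigr _ Uk_terms) -natr_sum natz subzn ?lez_nat; lia.
Qed.
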